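(* Let $\mathbf{k}$ be a field of characteristic $0$, $n\ge3$, $m\in\mathbf{k}\setminus\mathcal{S}_n$, and let $\rho$ be an irreducible representation of $Br_n(m)$, indexed by the partition $\lambda$. Then either the spectrum of $\rho(t_{12})$ is contained in $\{-1,1\}$, or $|\lambda|<n$ and the spectrum of $\rho(t_{12})$ equals $\{-1,1,1-m\}$.
   Context: $Br_n(m)$ is the Brauer algebra over $\mathbf{k}$ with basis the Brauer diagrams on $n$ top and $n$ bottom points, product by stacking (second factor below) with closed loops replaced by $m$; $s_{12}$ is the transposition diagram, $p_{12}$ the diagram joining top $1$ to top $2$ and bottom $1$ to bottom $2$ with other strands vertical, $t_{12}=s_{12}-p_{12}$. For a partition $\mu$ with $|\mu|\le n$, $n-|\mu|$ even, $P_\mu\in\mathbb{Q}[m]$ is the polynomial equal, at every sufficiently large integer $m$, to the dimension of the irreducible $O(m)$-module indexed by $\mu$; $\mathcal{S}_n=\{m\mid\exists\mu,\ |\mu|\le n,\ P_\mu(m)=0\}\subset\mathbb{Z}$. For $m\notin\mathcal{S}_n$, $Br_n(m)$ is split semisimple with irreducible representations indexed (Wenzl's parametrization) by partitions $\mu$ with $|\mu|\le n$, $n-|\mu|$ even; those with $|\mu|=n$ are those factoring through $\mathbf{k}\mathfrak{S}_n=Br_n(m)/(p_{12})$, and restriction from $Br_n(m)$ to $Br_{n-1}(m)$ follows the rule $\mathrm{Res}\,\rho_\lambda=\sum_{\mu\nearrow\lambda}\rho_\mu+\sum_{\lambda\nearrow\mu}\rho_\mu$, where $\mu\nearrow\lambda$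 means $\lambda$ is obtained from $\mu$ by adding one box. *)

From HB Require Import structures.
From mathcomp Require Import all_boot all_order all_algebra.
Set Implicit Arguments. Unset Strict Implicit. Unset Printing Implicit Defensive.
Import Order.TTheory GRing.Theory Num.Theory.
Local Open Scope ring_scope.

(* Brauer diagrams.  The 2n points of a diagram on n top and n bottom  *)
(* points: [inl i] = top point i, [inr i] = bottom point i (0-indexed, *)
(* so "points 1,2" of the paper are the ordinals 0,1).  A diagram is a *)
(* fixed-point-free involution of the points (a perfect matching).     *)
Definition bpt (n : nat) := ('I_n + 'I_n)%type.
Definition bfun (n : nat) := {ffun bpt n -> bpt n}.

Definition is_brauer n (D : bfun n) : bool :=
  [forall x, (D x != x) && (D (D x) == x)].

(* Stacking D1 (top) over D2 (bottom): vertex set = top row of D1,     *)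
(* middle row (bottom of D1 = top of D2), bottom row of D2.             *)
Definition bvtx (n : nat) := ('I_n + 'I_n + 'I_n)%type.
Definition up n (x : bpt n) : bvtx n :=
  match x with inl i => inl (inl i) | inr i => inl (inr i) end.
Definition down n (x : bpt n) : bvtx n :=
  match x with inl i => inl (inr i) | inr i => inr i end.
(* outer points of the stacked picture = points of the product diagram *)
Definition outer_of n (x : bpt n) : bvtx n :=
  match x with inl i => inl (inl i) | inr i => inr i end.
Definition is_outer n (v : bvtx n) : bool :=
  match v with inl (inr _) => false | _ => true end.

Definition stack_rel n (D1 D2 : bfun n) : rel (bvtx n) := fun u v =>
  [exists x, (u == up x) && (v == up (D1 x))] ||
  [exists x, (u == down x) && (v == down (D2 x))].

Definition bcomp n (D1 D2 : bfun n) : bfun n :=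
  [ffun x => odflt x [pick y | (y != x) &&
      connect (stack_rel D1 D2) (outer_of x) (outer_of y)]].

(* number of closed loops created by the stacking *)
Definition bloops n (D1 D2 : bfun n) : nat :=
  n_comp (stack_rel D1 D2)
    [pred v | ~~ is_outer v &&
       [forall y : bpt n, ~~ connect (stack_rel D1 D2) v (outer_of y)]].

Definition bid n : bfun n :=
  [ffun x => match x with inl i => inr i | inr i => inl i end].

Definition sw01 n (i : 'I_n) : 'I_n :=
  if (val i < 2)%N then odflt i [pick j : 'I_n | val j == (1 - val i)%N] else i.

Definition s12 n : bfun n :=
  [ffun x => match x with inl i => inr (sw01 i) | inr i => inl (sw01 i) end].

Definition p12 n : bfun n :=
  [ffun x => match x with
     | inl i => if (val i < 2)%N then inl (sw01 i) else inr i
     | inr i => if (val i < 2)%N then inr (sw01 i) else inl i end].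

(* Finite-dimensional representations of Br_n(m) on k^d (column        *)
(* vectors), given by their values on the diagram basis; the algebra   *)
(* map is the linear extension.                                        *)
Definition is_brauer_rep (k : fieldType) n (m : k) d
    (rho : bfun n -> 'M[k]_d) : Prop :=
  rho (bid n) = 1%:M /\
  forall D1 D2, is_brauer D1 -> is_brauer D2 ->
    rho D1 *m rho D2 = (m ^+ bloops D1 D2) *: rho (bcomp D1 D2).

(* irreducible: nonzero, and the only invariant subspaces of k^d are 0 *)
(* and k^d.  A subspace W of column vectors k^d is encoded as the row  *)
(* space of U (rows of U = vectors of W, transposed); invariance of W  *)
(* under v |-> rho(D) v reads  U *m (rho D)^T <= U.  W = 0 iff U = 0.   *)
Definition irreducible_brauer_rep (k : fieldType) n d
    (rho : bfun n -> 'M[k]_d) : Prop :=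
  (0 < d)%N /\
  forall U : 'M[k]_d,
    (forall D, is_brauer D -> (U *m (rho D)^T <= U)%MS) ->
    U = 0 \/ (U == (1%:M : 'M[k]_d))%MS.

(* rho factors through k S_n = Br_n(m)/(p_12): it kills the ideal      *)
(* (p_12), spanned by the diagrams having a horizontal (top-top) edge. *)
Definition factors_through_Sn (k : fieldType) n d
    (rho : bfun n -> 'M[k]_d) : Prop :=
  forall D, is_brauer D ->
    [exists i : 'I_n, if D (inl i) is inl _ then true else false] ->
    rho D = 0.

Definition rho_t12 (k : fieldType) n d (rho : bfun n -> 'M[k]_d) : 'M[k]_d :=
  rho (s12 n) - rho (p12 n).

Definition is_partition (s : seq nat) : bool :=
  sorted geq s && all (fun x => 0 < x)%N s.

(* 1-indexed row length lambda_i and column length lambda'_j *)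
Definition prow (s : seq nat) (i : nat) : int := (nth 0 s i.-1)%N%:Z.
Definition pcol (s : seq nat) (j : nat) : int := (count (fun x => j <= x)%N s)%:Z.

(* hook length of box (i,j) (1-indexed) *)
Definition phook (s : seq nat) (i j : nat) : int :=
  prow s i - j%:Z + pcol s j - i%:Z + 1.

(* content-type shift of the El Samra--King formula *)
Definition pshift (s : seq nat) (i j : nat) : int :=
  if (i <= j)%N then prow s i + prow s j - i%:Z - j%:Z
  else - pcol s i - pcol s j + i%:Z + j%:Z - 2.

(* P_mu: El Samra--King product formula for dim of the O(m)-irrep mu *)
Definition Pmu (s : seq nat) : {poly rat} :=
  \prod_(i < size s) \prod_(j < nth 0%N s i)
     (('X + ((pshift s i.+1 j.+1)%:~R : rat)%:P) *
        (((phook s i.+1 j.+1)%:~R : rat)^-1)%:P).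

Definition in_Sn (n : nat) (z : int) : Prop :=
  exists mu : seq nat,
    [/\ is_partition mu, (sumn mu <= n)%N, ~~ odd (n - sumn mu)
      & (Pmu mu).[z%:~R] = 0].

From HB Require Import structures.
From mathcomp Require Import all_boot all_order all_algebra zify ring.
Import Order.TTheory GRing.Theory Num.Theory.
Set Implicit Arguments. Unset Strict Implicit. Unset Printing Implicit Defensive.

(* The theorem only uses the relations among s = s_12, p = p_12 and q = p_23:
   s^2 = 1, sp = ps = p, p^2 = mp, q^2 = mq, qsq = qpq = q and pqp = p.
   With t = s - p one has tp = (1 - m) p and ts = 1 - p, so every eigenvector
   of t lies either in the image of p (eigenvalue 1 - m) or in the kernel of p,
   where t = s has eigenvalues +-1.  If rho(p) = 0 we are in the first case.
   Otherwise rho(q) <> 0 as rho(p) = rho(pqp), and each of -1, 1, 1 - m is an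
   eigenvalue: if t - a were invertible, the identities (t + 1)(s - 1) = 0,
   (t - 1)(m(s + 1) - 2p) = 0 and (t - 1 + m)p = 0 would give s = 1,
   m(s + 1) = 2p or p = 0, and sandwiching between q's yields
   (m - 1)q = 0, (m - 1)(m + 2)q = 0 or p = 0.  Since 1 and -2 lie in S_n,
   this is absurd.  Finally rho(p) <> 0 means rho does not factor through
   k S_n, and when m is 0 or 2 the value 1 - m is already +-1.
   The products of diagrams involved are computed by following the strands
   of the stacked pictures, their components being told apart by a labelling
   of the vertices that is constant along edges. *)

Section DiagramCodes.
Variable n : nat.
Local Notation N := n.+1.

(* A point of a diagram is coded as (is_top, column); a diagram is given by a
   function on codes. *)
Definition pt_of (p : bool * nat) : bpt N :=
  if p.1 then inl (inord p.2) else inr (inord p.2).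

Definition code_of (x : bpt N) : bool * nat :=
  match x with inl i => (true, val i) | inr i => (false, val i) end.

Lemma code_ofK : cancel code_of pt_of.
Proof. by case=> i; rewrite /pt_of /= inord_val. Qed.

Lemma pt_ofK p : (p.2 < N)%N -> code_of (pt_of p) = p.
Proof. by case: p => [[] j] h; rewrite /pt_of /= inordK. Qed.

Lemma code_of_lt (x : bpt N) : ((code_of x).2 < N)%N.
Proof. by case: x => i; apply: ltn_ord. Qed.

Definition bounded_code (g : bool * nat -> bool * nat) :=
  forall p, (p.2 < N)%N -> ((g p).2 < N)%N.

Definition diagram_of g : bfun N := [ffun x => pt_of (g (code_of x))].

Lemma diagram_ofE g p : (p.2 < N)%N -> diagram_of g (pt_of p) = pt_of (g p).
Proof. by move=> h; rewrite ffunE pt_ofK. Qed.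

Lemma code_of_diagram g x :
  bounded_code g -> code_of (diagram_of g x) = g (code_of x).
Proof. by move=> ok; rewrite ffunE pt_ofK //; apply/ok/code_of_lt. Qed.

Lemma is_brauer_diagram_of g : bounded_code g ->
  (forall b i, (i < N)%N -> g (b, i) != (b, i) /\ g (g (b, i)) = (b, i)) ->
  is_brauer (diagram_of g).
Proof.
move=> ok h; apply/forallP => x; rewrite -(code_ofK x); set p := code_of x.
have hp : (p.2 < N)%N by apply: code_of_lt.
have [gp_neq ggp] : g p != p /\ g (g p) = p by rewrite [p]surjective_pairing; apply: h.
rewrite !diagram_ofE //; last exact: ok.
rewrite ggp eqxx andbT; apply: contra gp_neq => /eqP /(congr1 code_of).
by rewrite !pt_ofK // => [-> //|]; apply: ok.
Qed.

Lemma stack_rel_sym (D1 D2 : bfun N) : is_brauer D1 -> is_brauer D2 ->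
  symmetric (stack_rel D1 D2).
Proof.
move=> /forallP b1 /forallP b2.
suff ss u v : stack_rel D1 D2 u v -> stack_rel D1 D2 v u.
  by move=> u v; apply/idP/idP; apply: ss.
case/orP=> /existsP [x /andP [/eqP -> /eqP ->]]; apply/orP.
  left; apply/existsP; exists (D1 x).
  by case/andP: (b1 x) => _ /eqP ->; rewrite !eqxx.
right; apply/existsP; exists (D2 x).
by case/andP: (b2 x) => _ /eqP ->; rewrite !eqxx.
Qed.

Lemma connect_invariant (D1 D2 : bfun N) (c : bvtx N -> nat) :
  (forall x, c (up x) = c (up (D1 x))) ->
  (forall x, c (down x) = c (down (D2 x))) ->
  forall u v, connect (stack_rel D1 D2) u v -> c u = c v.
Proof.
move=> h1 h2 u v /connectP [p pth ->].
elim: p u pth => //= w p IH u /andP [e pth]; rewrite -(IH _ pth).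
by case/orP: e => /existsP [x /andP [/eqP -> /eqP ->]].
Qed.

(* A vertex of the stacked picture is read as (level, column), with levels
   0 (top), 1 (middle) and 2 (bottom). *)
Definition level_col (v : bvtx N) : nat * nat :=
  match v with
  | inl (inl i) => (0, val i) | inl (inr i) => (1, val i) | inr i => (2, val i)
  end.

Definition lvl_up (b : bool) : nat := if b then 0 else 1.
Definition lvl_down (b : bool) : nat := if b then 1 else 2.
Definition lvl_outer (b : bool) : nat := if b then 0 else 2.

Lemma level_col_up x : level_col (up x) = (lvl_up (code_of x).1, (code_of x).2).
Proof. by case: x. Qed.

Lemma level_col_down x :
  level_col (down x) = (lvl_down (code_of x).1, (code_of x).2).
Proof. by case: x. Qed.

Lemma level_col_outer x :
  level_col (outer_of x) = (lvl_outer (code_of x).1, (code_of x).2).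
Proof. by case: x. Qed.

(* [trace g1 g2 f d p] follows the strand through the point p of the upper
   (d = true) or lower (d = false) diagram, for at most f edges, and returns
   the outer point where it leaves the stacked picture. *)
Fixpoint trace (g1 g2 : bool * nat -> bool * nat) (f : nat) (d : bool)
    (p : bool * nat) : option (bool * nat) :=
  if f is f'.+1 then
    if d then let q := g1 p in
      if q.1 then Some (true, q.2) else trace g1 g2 f' false (true, q.2)
    else let q := g2 p in
      if q.1 then trace g1 g2 f' true (false, q.2) else Some (false, q.2)
  else None.

Definition trace_vtx (d : bool) (p : bool * nat) : bvtx N :=
  if d then up (pt_of p) else down (pt_of p).

Lemma trace_vtx_outer p : trace_vtx p.1 p = outer_of (pt_of p).
Proof. by case: p => [[] j]. Qed.

Variables g1 g2 : bool * nat -> bool * nat.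
Hypotheses (ok1 : bounded_code g1) (ok2 : bounded_code g2).
Local Notation R := (stack_rel (diagram_of g1) (diagram_of g2)).

Lemma trace_connect f d p r : (p.2 < N)%N -> trace g1 g2 f d p = Some r ->
  connect R (trace_vtx d p) (outer_of (pt_of r)).
Proof.
elim: f d p => // f IH [] p hp /=.
  have e : R (trace_vtx true p) (up (pt_of (g1 p))).
    by apply/orP; left; apply/existsP; exists (pt_of p); rewrite diagram_ofE // !eqxx.
  move: (ok1 hp) e; case: (g1 p) => [[] j] /= hj e.
    by case=> <-; apply: connect1; rewrite /pt_of /= in e *.
  by move=> /(IH false (true, j) hj) /(connect_trans (connect1 e)).
have e : R (trace_vtx false p) (down (pt_of (g2 p))).
  by apply/orP; right; apply/existsP; exists (pt_of p); rewrite diagram_ofE // !eqxx.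
move: (ok2 hp) e; case: (g2 p) => [[] j] /= hj e.
  by move=> /(IH true (false, j) hj) /(connect_trans (connect1 e)).
by case=> <-; apply: connect1; rewrite /pt_of /= in e *.
Qed.

Lemma trace_connect_middle f (i : 'I_N) r :
  trace g1 g2 f false (true, val i) = Some r ->
  connect R (inl (inr i)) (outer_of (pt_of r)).
Proof.
move=> /(trace_connect (p := (true, val i)) (ltn_ord i)).
by rewrite /trace_vtx /pt_of /= inord_val.
Qed.

(* Labellings constant along edges separate the connected components. *)
Definition edge_invariant (cl : nat * nat -> nat) (lvl : bool -> nat) g :=
  forall b i, (i < N)%N -> cl (lvl b, i) = cl (lvl (g (b, i)).1, (g (b, i)).2).

Variable cl : nat * nat -> nat.
Hypotheses (cl1 : edge_invariant cl lvl_up g1) (cl2 : edge_invariant cl lvl_down g2).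

Lemma connect_label u v : connect R u v -> cl (level_col u) = cl (level_col v).
Proof.
move: u v; apply: (@connect_invariant _ _ (fun v => cl (level_col v))) => x;
  rewrite ?level_col_up ?level_col_down code_of_diagram //;
  case: (code_of x) (code_of_lt x) => b i /= hi; [exact: cl1 | exact: cl2].
Qed.

Lemma bcomp_diagram_of g f : bounded_code g ->
  (forall b i, (i < N)%N -> trace g1 g2 f b (b, i) = Some (g (b, i))) ->
  (forall b i, (i < N)%N -> g (b, i) != (b, i)) ->
  (forall b i b' i', (i < N)%N -> (i' < N)%N ->
     cl (lvl_outer b, i) = cl (lvl_outer b', i') ->
     (b', i') = (b, i) \/ (b', i') = g (b, i)) ->
  bcomp (diagram_of g1) (diagram_of g2) = diagram_of g.
Proof.
move=> ok htr hE hu; apply/ffunP => x; rewrite /bcomp !ffunE /=.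
have hx := code_of_lt x.
have cx : connect R (outer_of x) (outer_of (pt_of (g (code_of x)))).
  move: (htr (code_of x).1 (code_of x).2 hx); rewrite -surjective_pairing.
  by move=> /(trace_connect hx); rewrite trace_vtx_outer code_ofK.
case: pickP => [y /andP [yx cxy] | none] /=.
  have := connect_label cxy; rewrite !level_col_outer.
  move=> /(hu _ _ _ _ hx (code_of_lt y)); rewrite -!surjective_pairing => -[ey | ey].
    by move: yx; rewrite -(code_ofK y) -(code_ofK x) ey eqxx.
  by rewrite -ey code_ofK.
move: (none (pt_of (g (code_of x)))); rewrite cx andbT => /negbFE /eqP ex.
move: (hE (code_of x).1 (code_of x).2 hx); rewrite -surjective_pairing.
by rewrite -{1}ex pt_ofK ?eqxx //; apply: ok.
Qed.

Lemma bloops_eq0 f :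
  (forall i, (i < N)%N -> exists r, trace g1 g2 f false (true, i) = Some r) ->
  bloops (diagram_of g1) (diagram_of g2) = 0%N.
Proof.
move=> h; rewrite /bloops /n_comp_mem; apply: eq_card0 => v; rewrite !inE.
apply/negbTE/nandP; right; apply/nandP.
case: v => [[i|i]|i] /=; try by left.
right; have [r hr] := h _ (ltn_ord i).
by apply/negP => /forallP /(_ (pt_of r)); rewrite (trace_connect_middle hr).
Qed.

Lemma bloops_eq1 f a L :
  is_brauer (diagram_of g1) -> is_brauer (diagram_of g2) ->
  (a < N)%N -> cl (1%N, a) = L ->
  (forall b i, (i < N)%N -> cl (lvl_outer b, i) != L) ->
  (forall i, (i < N)%N -> cl (1%N, i) = L -> i = a \/ g1 (false, a) = (false, i)) ->
  (forall i, (i < N)%N -> cl (1%N, i) != L ->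
     exists r, trace g1 g2 f false (true, i) = Some r) ->
  bloops (diagram_of g1) (diagram_of g2) = 1%N.
Proof.
move=> b1 b2 ha haL hO hM hF.
have sym : connect_sym R by apply/sym_connect_sym/stack_rel_sym.
pose Ma : bvtx N := inl (inr (inord a)).
have hMa : cl (level_col Ma) = L by rewrite /= inordK.
rewrite /bloops -(n_comp_connect sym Ma); apply: eq_n_comp_r => v; rewrite !inE.
apply/idP/idP.
  case: v => [[i|i]|i] //= /forallP hv; have hi := ltn_ord i.
  have [hL | hL] := eqVneq (cl (1%N, val i)) L.
    have [ei | eg] := hM _ hi hL; first by rewrite /Ma -ei inord_val connect0.
    apply/connect1/orP; left; apply/existsP; exists (pt_of (false, a)).
    by rewrite diagram_ofE // eg /pt_of /= inord_val !eqxx.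
  have [r hr] := hF _ hi hL.
  by move: (hv (pt_of r)); rewrite (trace_connect_middle hr).
move=> c; have lv := connect_label c; rewrite hMa in lv.
apply/andP; split.
  move: c lv; case: v => [[i|i]|i] //= _ lv.
    by move: (hO true _ (ltn_ord i)); rewrite lv eqxx.
  by move: (hO false _ (ltn_ord i)); rewrite lv eqxx.
apply/forallP => y; apply/negP => cy.
have := connect_label (connect_trans c cy); rewrite hMa level_col_outer => e.
by move: (hO (code_of y).1 (code_of y).2 (code_of_lt y)); rewrite -e eqxx.
Qed.

End DiagramCodes.

Definition swap01 (j : nat) : nat := match j with 0 => 1 | 1 => 0 | _ => j end.

Definition cid (p : bool * nat) := (~~ p.1, p.2).
Definition cs12 (p : bool * nat) := (~~ p.1, swap01 p.2).
Definition cp12 (p : bool * nat) :=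
  match p.2 with 0 | 1 => (p.1, swap01 p.2) | _ => (~~ p.1, p.2) end.
Definition cp23 (p : bool * nat) :=
  match p.2 with 1 => (p.1, 2) | 2 => (p.1, 1) | _ => (~~ p.1, p.2) end.
Definition cp23s12 (p : bool * nat) :=
  match p with
  | (true, 0) => (false, 1) | (true, 1) => (true, 2) | (true, 2) => (true, 1)
  | (false, 0) => (false, 2) | (false, 1) => (true, 0) | (false, 2) => (false, 0)
  | (b, j) => (~~ b, j) end.
Definition cp23p12 (p : bool * nat) :=
  match p with
  | (true, 0) => (false, 2) | (true, 1) => (true, 2) | (true, 2) => (true, 1)
  | (false, 0) => (false, 1) | (false, 1) => (false, 0) | (false, 2) => (true, 0)
  | (b, j) => (~~ b, j) end.
Definition cp12p23 (p : bool * nat) :=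
  match p with
  | (true, 0) => (true, 1) | (true, 1) => (true, 0) | (true, 2) => (false, 0)
  | (false, 0) => (true, 2) | (false, 1) => (false, 2) | (false, 2) => (false, 1)
  | (b, j) => (~~ b, j) end.

(* Component labels for a product of two of the diagrams above, given on the
   first three columns by a table; the columns j >= 3 carry a straight strand,
   labelled j + 4 to keep it apart from the table values 0..3. *)
Definition label (t : nat -> nat -> nat) (v : nat * nat) : nat :=
  match v.2 with 0 | 1 | 2 => t v.1 v.2 | j => j.+4 end.

Definition lab_ss l j := match l with 1 => swap01 j | _ => j end.
Definition lab_sp l j :=
  match l, j with 2, 0 | 2, 1 => 1 | _, 0 | _, 1 => 0 | _, _ => 2 end.
Definition lab_ps l j :=
  match l, j with 0, 0 | 0, 1 => 0 | _, 0 | _, 1 => 1 | _, _ => 2 end.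
Definition lab_pp l j :=
  match l, j with
  | 0, 0 | 0, 1 => 0 | 1, 0 | 1, 1 => 3 | 2, 0 | 2, 1 => 1 | _, _ => 2 end.
Definition lab_qq l j :=
  match l, j with _, 0 => 0 | 0, _ => 1 | 1, _ => 3 | _, _ => 2 end.
Definition lab_qs l j :=
  match l, j with
  | 0, 0 => 0 | 0, _ => 1 | 1, 0 => 0 | 1, _ => 2 | _, 1 => 0 | _, _ => 2 end.
Definition lab_qxq l j :=
  match l, j with 0, 0 => 0 | 0, _ => 1 | 1, _ => 0 | _, 0 => 0 | _, _ => 2 end.
Definition lab_qp l j :=
  match l, j with 0, 0 => 0 | 0, _ => 1 | 1, _ => 0 | _, 2 => 0 | _, _ => 2 end.
Definition lab_pq l j :=
  match l, j with 0, 2 => 1 | 0, _ => 0 | 1, _ => 1 | _, 0 => 1 | _, _ => 2 end.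
Definition lab_pqp l j :=
  match l, j with 0, 2 => 1 | 0, _ => 0 | 1, _ => 1 | _, 2 => 1 | _, _ => 2 end.

Ltac case_code := move=> [] [|[|[|?]]] ? //=.
Ltac solve_bounded := move=> [[] [|[|[|?]]]] /= ? //=.

Ltac solve_bcomp lab :=
  apply: (@bcomp_diagram_of _ _ _ _ _ (label lab) _ _ _ 8);
  [ solve_bounded | solve_bounded | case_code | case_code | solve_bounded
  | case_code | case_code
  | move=> [] [|[|[|?]]] [] [|[|[|?]]] ? ?; rewrite /label /=;
    first [ by left | by right | by [] | move=> [->]; by [left | right] ] ].

Ltac solve_bloops1 lab a br :=
  apply: (@bloops_eq1 _ _ _ _ _ (label lab) _ _ 8 a 3);
  [ solve_bounded | solve_bounded | case_code | case_code | exact: br | exact: br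
  | by [] | by [] | case_code
  | move=> [|[|[|?]]] ? //=; by [left | right]
  | move=> [|[|[|?]]] ? //= _; by eexists ].

Ltac solve_bloops0 :=
  apply: (@bloops_eq0 _ _ _ _ _ 8);
  [ solve_bounded | solve_bounded | move=> [|[|[|?]]] ? /=; by eexists ].

Section ThreeStrandDiagrams.
Variable n : nat.
Local Notation D := (diagram_of n.+2).

Ltac solve_is_brauer := apply: is_brauer_diagram_of; [solve_bounded | case_code].
Lemma is_brauer_cs12 : is_brauer (D cs12). Proof. solve_is_brauer. Qed.
Lemma is_brauer_cp12 : is_brauer (D cp12). Proof. solve_is_brauer. Qed.
Lemma is_brauer_cp23 : is_brauer (D cp23). Proof. solve_is_brauer. Qed.
Lemma is_brauer_cp23s12 : is_brauer (D cp23s12). Proof. solve_is_brauer. Qed.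
Lemma is_brauer_cp23p12 : is_brauer (D cp23p12). Proof. solve_is_brauer. Qed.
Lemma is_brauer_cp12p23 : is_brauer (D cp12p23). Proof. solve_is_brauer. Qed.

Lemma bcomp_s12_s12 : bcomp (D cs12) (D cs12) = D cid.
Proof. solve_bcomp lab_ss. Qed.
Lemma bcomp_s12_p12 : bcomp (D cs12) (D cp12) = D cp12.
Proof. solve_bcomp lab_sp. Qed.
Lemma bcomp_p12_s12 : bcomp (D cp12) (D cs12) = D cp12.
Proof. solve_bcomp lab_ps. Qed.
Lemma bcomp_p12_p12 : bcomp (D cp12) (D cp12) = D cp12.
Proof. solve_bcomp lab_pp. Qed.
Lemma bcomp_p23_p23 : bcomp (D cp23) (D cp23) = D cp23.
Proof. solve_bcomp lab_qq. Qed.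
Lemma bcomp_p23_s12 : bcomp (D cp23) (D cs12) = D cp23s12.
Proof. solve_bcomp lab_qs. Qed.
Lemma bcomp_p23s12_p23 : bcomp (D cp23s12) (D cp23) = D cp23.
Proof. solve_bcomp lab_qxq. Qed.
Lemma bcomp_p23_p12 : bcomp (D cp23) (D cp12) = D cp23p12.
Proof. solve_bcomp lab_qp. Qed.
Lemma bcomp_p23p12_p23 : bcomp (D cp23p12) (D cp23) = D cp23.
Proof. solve_bcomp lab_qxq. Qed.
Lemma bcomp_p12_p23 : bcomp (D cp12) (D cp23) = D cp12p23.
Proof. solve_bcomp lab_pq. Qed.
Lemma bcomp_p12p23_p12 : bcomp (D cp12p23) (D cp12) = D cp12.
Proof. solve_bcomp lab_pqp. Qed.

Lemma bloops_s12_s12 : bloops (D cs12) (D cs12) = 0%N. Proof. solve_bloops0. Qed.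
Lemma bloops_s12_p12 : bloops (D cs12) (D cp12) = 0%N. Proof. solve_bloops0. Qed.
Lemma bloops_p12_s12 : bloops (D cp12) (D cs12) = 0%N. Proof. solve_bloops0. Qed.
Lemma bloops_p23_s12 : bloops (D cp23) (D cs12) = 0%N. Proof. solve_bloops0. Qed.
Lemma bloops_p23s12_p23 : bloops (D cp23s12) (D cp23) = 0%N. Proof. solve_bloops0. Qed.
Lemma bloops_p23_p12 : bloops (D cp23) (D cp12) = 0%N. Proof. solve_bloops0. Qed.
Lemma bloops_p23p12_p23 : bloops (D cp23p12) (D cp23) = 0%N. Proof. solve_bloops0. Qed.
Lemma bloops_p12_p23 : bloops (D cp12) (D cp23) = 0%N. Proof. solve_bloops0. Qed.
Lemma bloops_p12p23_p12 : bloops (D cp12p23) (D cp12) = 0%N. Proof. solve_bloops0. Qed.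
Lemma bloops_p12_p12 : bloops (D cp12) (D cp12) = 1%N.
Proof. solve_bloops1 lab_pp 0%N is_brauer_cp12. Qed.
Lemma bloops_p23_p23 : bloops (D cp23) (D cp23) = 1%N.
Proof. solve_bloops1 lab_qq 1%N is_brauer_cp23. Qed.

Lemma val_sw01 (i : 'I_n.+3) : val (sw01 i) = swap01 (val i).
Proof.
rewrite /sw01; case: ifP => h; last by case: i h => [[|[|j]] ?].
case: pickP => [j /eqP -> | none]; first by case: i h => [[|[|j']] ?].
have hl : (1 - val i < n.+3)%N by lia.
by move: (none (Ordinal hl)); rewrite /= eqxx.
Qed.

Lemma bid_diagram : bid n.+3 = D cid.
Proof.
apply/ffunP => x; rewrite !ffunE; case: x => i /=; rewrite /pt_of /=; congr (_ _);
  exact/val_inj/esym/inordK.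
Qed.

Lemma s12_diagram : s12 n.+3 = D cs12.
Proof.
apply/ffunP => x; rewrite !ffunE; case: x => i /=; rewrite /pt_of /=; congr (_ _);
  by apply: val_inj; rewrite /= val_sw01 inordK //; case: i => [[|[|j]] ?].
Qed.

Lemma p12_diagram : p12 n.+3 = D cp12.
Proof.
apply/ffunP => x; rewrite !ffunE; case: x => i /=; rewrite /pt_of /=;
  case: i => [[|[|[|j]]] hj] /=; congr (_ _); apply: val_inj;
  by rewrite /= ?val_sw01 inordK.
Qed.

End ThreeStrandDiagrams.

Local Open Scope ring_scope.

Lemma Pmu_root (s : seq nat) (z : int) i j :
  (i < size s)%N -> (j < nth 0%N s i)%N ->
  (z%:~R : rat) + (pshift s i.+1 j.+1)%:~R = 0 -> (Pmu s).[z%:~R] = 0.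
Proof.
move=> hi hj h; rewrite /Pmu horner_prod; apply/eqP; rewrite prodf_seq_eq0.
apply/hasP; exists (Ordinal hi); first by rewrite mem_index_enum.
rewrite /= horner_prod prodf_seq_eq0; apply/hasP; exists (Ordinal hj).
  by rewrite mem_index_enum.
by rewrite /= hornerM hornerD hornerX hornerC h mul0r.
Qed.

Lemma in_Sn_root n (mu : seq nat) z : is_partition mu -> (sumn mu <= n)%N ->
  odd n = odd (sumn mu) -> (Pmu mu).[z%:~R] = 0 -> in_Sn n z.
Proof. by move=> h1 h2 h3 h4; exists mu; rewrite oddB // h3 addbb. Qed.

(* 1 is a root of P_(1,1) = m(m - 1)/2 and of P_(1,1,1), and -2 one of
   P_(2) = (m + 2)(m - 1)/2 and of P_(2,1); in each pair one partition has the
   parity of n. *)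
Lemma in_Sn_1 n : (3 <= n)%N -> in_Sn n 1.
Proof.
move=> hn; have [ho | ho] := boolP (odd n).
  apply: (@in_Sn_root _ [:: 1; 1; 1]%N); rewrite /= ?ho //; try lia.
  by apply: (@Pmu_root _ _ 2 0); rewrite /pshift /prow /pcol.
apply: (@in_Sn_root _ [:: 1; 1]%N); rewrite /= ?(negbTE ho) //; try lia.
by apply: (@Pmu_root _ _ 1 0); rewrite /pshift /prow /pcol.
Qed.

Lemma in_Sn_N2 n : (3 <= n)%N -> in_Sn n (-2).
Proof.
move=> hn; have [ho | ho] := boolP (odd n).
  apply: (@in_Sn_root _ [:: 2; 1]%N); rewrite /= ?ho //; try lia.
  by apply: (@Pmu_root _ _ 0 0); rewrite /pshift /prow /pcol.
apply: (@in_Sn_root _ [:: 2]%N); rewrite /= ?(negbTE ho) //; try lia.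
by apply: (@Pmu_root _ _ 0 0); rewrite /pshift /prow /pcol.
Qed.

Lemma eigenvalue_involution (k : fieldType) d (S : 'M[k]_d) a :
  S * S = 1 -> eigenvalue S a -> a = 1 \/ a = -1.
Proof.
move=> SS /eigenvalueP [v vS v0].
have SS' : S *m S = 1%:M := SS.
have : v = (a * a) *: v.
  by rewrite -{1}(mulmx1 v) -SS' mulmxA vS -scalemxAl vS scalerA.
move/eqP; rewrite -subr_eq0 -{1}(scale1r v) -scalerBl scaler_eq0 (negbTE v0) orbF.
have -> : 1 - a * a = (1 - a) * (1 + a) by ring.
rewrite mulf_eq0 subr_eq0 addr_eq0 => /orP [/eqP <- | /eqP ->]; first by left.
by right; rewrite opprK.
Qed.

Lemma not_eigenvalue_mul_eq0 (k : fieldType) d (A X : 'M[k]_d) a :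
  ~~ eigenvalue A a -> (A - a%:M) * X = 0 -> X = 0.
Proof.
rewrite /eigenvalue /eigenspace negbK kermx_eq0 row_free_unit => u hX.
by rewrite -[X](mulKmx u) mulmxE hX mulr0.
Qed.

Section SubProjectionSpectrum.
Variables (k : fieldType) (d : nat) (m : k) (S P Q : 'M[k]_d).
Hypotheses (SS : S * S = 1) (SP : S * P = P) (PS : P * S = P) (PP : P * P = m *: P).
Hypotheses (QQ : Q * Q = m *: Q) (QSQ : Q * S * Q = Q) (QPQ : Q * P * Q = Q).
Hypotheses (PQP : P * Q * P = P) (P_neq0 : P != 0).

Lemma sub_proj_mulr : (S - P) * P = (1 - m) *: P.
Proof. by rewrite mulrBl SP PP scalerBl scale1r. Qed.

Lemma eigenvalue_sub_proj a :
  eigenvalue (S - P) a -> a = -1 \/ a = 1 \/ a = 1 - m.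
Proof.
case/eigenvalueP => v vt v0.
have : (a - (1 - m)) *: (v *m P) = 0.
  by rewrite scalerBl scalemxAl -vt -mulmxA (sub_proj_mulr : _ *m P = _)
             -scalemxAr subrr.
move/eqP; rewrite scaler_eq0 subr_eq0 => /orP [/eqP -> | /eqP vP0]; first by do 2!right.
have vS : v *m S = a *: v by rewrite -vt mulmxBr vP0 subr0.
have evS : eigenvalue S a by apply/eigenvalueP; exists v.
by case: (eigenvalue_involution SS evS) => ->; [right; left | left].
Qed.

Lemma eigenvalue_sub_proj_1_sub : eigenvalue (S - P) (1 - m).
Proof.
apply: contraT => ne; move: P_neq0.
rewrite (@not_eigenvalue_mul_eq0 _ _ _ P _ ne) ?eqxx //.
by rewrite mulrBl sub_proj_mulr -mulmxE mul_scalar_mx subrr.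
Qed.

Lemma Q_neq0 : Q != 0.
Proof. by apply: contraNneq P_neq0 => Q0; rewrite -PQP Q0 mulr0 mul0r. Qed.

Hypotheses (m_neq1 : m != 1) (m_neqN2 : m != -2).

Lemma eigenvalue_sub_proj_N1 : eigenvalue (S - P) (-1).
Proof.
apply: contraT => ne.
have : (S - P - (-1)%:M) * (S - 1) = 0.
  rewrite (_ : (-1)%:M = -1); last by rewrite raddfN.
  rewrite !mulrBr !mulrBl mulr1 SS PS !mulN1r mulr1 !opprK.
  by apply/eqP; rewrite subr_eq0 addrC addrA addrAC.
move=> /(not_eigenvalue_mul_eq0 ne) /eqP; rewrite subr_eq0 => /eqP S1.
have mQ : m *: Q = Q by rewrite -QQ -{3}QSQ S1 mulr1.
have : (m - 1) *: Q = 0 by rewrite scalerBl scale1r mQ subrr.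
by move/eqP; rewrite scaler_eq0 subr_eq0 (negbTE m_neq1) (negbTE Q_neq0).
Qed.

Lemma eigenvalue_sub_proj_1 : eigenvalue (S - P) 1.
Proof.
apply: contraT => ne.
have tS1 : (S - P - 1) * (S + 1) = - (P + P).
  rewrite mulrDr mulr1 !mulrBl SS PS mul1r.
  by rewrite opprD !addrA subrK [LHS]addrC !addrA addNr add0r.
have tP1 : (S - P - 1) * P = - (m *: P).
  by rewrite mulrBl sub_proj_mulr mul1r scalerBl scale1r addrAC subrr add0r.
have : (S - P - 1%:M) * (m *: (S + 1) - 2%:R *: P) = 0.
  rewrite mulrBr -!mulmxE -!scalemxAr !mulmxE tS1 tP1 !scalerN opprK scalerA.
  by rewrite scalerDr mulr_natl -scalerMnl mulr2n addNr.
move=> /(not_eigenvalue_mul_eq0 ne) /eqP; rewrite subr_eq0 => /eqP E.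
have : Q * (m *: (S + 1)) * Q = Q * (2%:R *: P) * Q by rewrite E.
rewrite -!mulmxE -!scalemxAr -!scalemxAl !mulmxE mulrDr mulrDl QSQ QPQ mulr1 QQ.
move=> /eqP; rewrite -subr_eq0 scalerDr scalerA -scalerDl -scalerBl.
have -> : m + m * m - 2%:R = (m - 1) * (m + 2%:R) by ring.
rewrite scaler_eq0 mulf_eq0 subr_eq0 addr_eq0 (negbTE m_neq1) (negbTE m_neqN2).
by rewrite (negbTE Q_neq0).
Qed.

Lemma eigenvalue_sub_projE a :
  eigenvalue (S - P) a <-> a = -1 \/ a = 1 \/ a = 1 - m.
Proof.
split=> [|[-> | [-> | ->]]]; first exact: eigenvalue_sub_proj.
- exact: eigenvalue_sub_proj_N1.
- exact: eigenvalue_sub_proj_1.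
- exact: eigenvalue_sub_proj_1_sub.
Qed.

End SubProjectionSpectrum.

Section BrauerRelations.
Variables (k : fieldType) (m : k) (n d : nat) (rho : bfun n.+3 -> 'M[k]_d).
Hypothesis hrep : is_brauer_rep m rho.
Local Notation D := (diagram_of n.+2).

Lemma rho_mul D1 D2 : is_brauer D1 -> is_brauer D2 ->
  rho D1 * rho D2 = m ^+ bloops D1 D2 *: rho (bcomp D1 D2).
Proof. exact: hrep.2. Qed.

Lemma rho_s12_s12 : rho (D cs12) * rho (D cs12) = 1.
Proof.
rewrite rho_mul ?is_brauer_cs12 // bcomp_s12_s12 bloops_s12_s12 scale1r.
by rewrite -bid_diagram hrep.1.
Qed.

Lemma rho_s12_p12 : rho (D cs12) * rho (D cp12) = rho (D cp12).
Proof.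
rewrite rho_mul ?is_brauer_cs12 ?is_brauer_cp12 // bcomp_s12_p12.
by rewrite bloops_s12_p12 scale1r.
Qed.

Lemma rho_p12_s12 : rho (D cp12) * rho (D cs12) = rho (D cp12).
Proof.
rewrite rho_mul ?is_brauer_cs12 ?is_brauer_cp12 // bcomp_p12_s12.
by rewrite bloops_p12_s12 scale1r.
Qed.

Lemma rho_p12_p12 : rho (D cp12) * rho (D cp12) = m *: rho (D cp12).
Proof. by rewrite rho_mul ?is_brauer_cp12 // bcomp_p12_p12 bloops_p12_p12 expr1. Qed.

Lemma rho_p23_p23 : rho (D cp23) * rho (D cp23) = m *: rho (D cp23).
Proof. by rewrite rho_mul ?is_brauer_cp23 // bcomp_p23_p23 bloops_p23_p23 expr1. Qed.

Lemma rho_p23_s12_p23 : rho (D cp23) * rho (D cs12) * rho (D cp23) = rho (D cp23).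
Proof.
rewrite rho_mul ?is_brauer_cp23 ?is_brauer_cs12 // bcomp_p23_s12 bloops_p23_s12 scale1r.
rewrite rho_mul ?is_brauer_cp23 ?is_brauer_cp23s12 // bcomp_p23s12_p23.
by rewrite bloops_p23s12_p23 scale1r.
Qed.

Lemma rho_p23_p12_p23 : rho (D cp23) * rho (D cp12) * rho (D cp23) = rho (D cp23).
Proof.
rewrite rho_mul ?is_brauer_cp23 ?is_brauer_cp12 // bcomp_p23_p12 bloops_p23_p12 scale1r.
rewrite rho_mul ?is_brauer_cp23 ?is_brauer_cp23p12 // bcomp_p23p12_p23.
by rewrite bloops_p23p12_p23 scale1r.
Qed.

Lemma rho_p12_p23_p12 : rho (D cp12) * rho (D cp23) * rho (D cp12) = rho (D cp12).
Proof.
rewrite rho_mul ?is_brauer_cp12 ?is_brauer_cp23 // bcomp_p12_p23 bloops_p12_p23 scale1r.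
rewrite rho_mul ?is_brauer_cp12 ?is_brauer_cp12p23 // bcomp_p12p23_p12.
by rewrite bloops_p12p23_p12 scale1r.
Qed.

End BrauerRelations.

Unset Implicit Arguments.

Theorem mainTheorem9 (k : fieldType) (hk : [pchar k] =i pred0)
  (n : nat) (hn : (3 <= n)%N) (m : k)
  (hm : ~ (exists z : int, in_Sn n z /\ m = z%:~R))
  (d : nat) (rho : bfun n -> 'M[k]_d)
  (hrep : is_brauer_rep m rho) (hirr : irreducible_brauer_rep rho) :
  (forall a : k, eigenvalue (rho_t12 rho) a -> a = 1 \/ a = -1)
  \/
  (~ factors_through_Sn rho /\
   forall a : k, eigenvalue (rho_t12 rho) a <-> (a = -1 \/ a = 1 \/ a = 1 - m)).
Proof.
have m_neq1 : m != 1.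
  by apply: contra_notN hm => /eqP ->; exists 1; split; [exact: in_Sn_1 |].
have m_neqN2 : m != -2.
  by apply: contra_notN hm => /eqP ->; exists (-2); split; [exact: in_Sn_N2 |].
case: n hn rho hrep {hm hirr} => [|[|[|n]]] // _ rho hrep.
rewrite /rho_t12 s12_diagram p12_diagram.
have [P0 | P_neq0] := eqVneq (rho (diagram_of n.+2 cp12)) 0.
  by left => a; rewrite P0 subr0; apply: eigenvalue_involution; exact: rho_s12_s12 hrep.
have spec := eigenvalue_sub_projE (rho_s12_s12 hrep) (rho_s12_p12 hrep) (rho_p12_s12 hrep)
  (rho_p12_p12 hrep) (rho_p23_p23 hrep) (rho_p23_s12_p23 hrep)
  (rho_p23_p12_p23 hrep) (rho_p12_p23_p12 hrep) P_neq0 m_neq1 m_neqN2.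
have [m02 | m02] := boolP ((m == 0) || (m == 2%:R)).
  left => a /spec [-> | [-> | ->]]; [by right | by left |].
  by case/orP: m02 => /eqP ->; [left; rewrite subr0 | right; ring].
right; split=> // factors; move: P_neq0.
rewrite -p12_diagram factors ?eqxx // p12_diagram ?is_brauer_cp12 //.
by apply/existsP; exists ord0; rewrite ffunE.
Qed.
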